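(* Let $X$ be a topologically complete space and $\mathcal A$ a family of closed, locally finite, normal covers of $X$ satisfying conditions (I) and (II), and let $\Lambda$, $\mathrm{cov}_\lambda$, $F_\lambda$, $F_\infty$, $\wedge$ be as in the context. Then: (1) for each open subset $U$ of $X$, each $x\in U$ and each positive integer $n$, there exists $\lambda\in\Lambda$ such that $\bigcup\mathrm{star}^n_{\mathrm{cov}_\lambda}(x)\subset U$; (2) for each $z\in F_\infty$, the set $\bigcap_{\lambda\in\Lambda}\wedge z(\lambda)$ consists of exactly one point.
   Context: A topologically complete space is a Tychonoff space complete with respect to its finest uniformity. A closed, locally finite, normal cover $\alpha$ of $X$ is a locally finite cover by closed sets admitting a partition of unity $\{\phi_{\alpha,V}:V\in\alpha\}$ with $\mathrm{cl}(\phi_{\alpha,V}^{-1}((0,1]))\subset\mathrm{int}(V)$, $\sum_V\phi_{\alpha,V}=1$. For a cover $\alpha$ and $S\subset X$: $\mathrm{star}_\alpha(S)=\{V\in\alpha:V\cap S\neq\emptyset\}$, $\mathrm{star}^1_\alpha=\mathrm{star}_\alpha$, $\mathrm{star}^{n+1}_\alpha(S)=\{V\in\alpha:\ V\cap W\neq\emptyset\text{ for some }W\in\mathrm{star}^n_\alpha(S)\}$; $\mathrm{star}_\alpha(x)=\mathrm{star}_\alpha(\{x\})$; $\bigcup$ of a collection is the union of its members. Conditions: (I) for each open $U\subset X$ and $x\in U$ there is $\alpha\in\mathcal A$ with $\bigcup\mathrm{star}_\alpha(x)\subset U$; (II) if $f(\alpha)\in\alpha$ is chosen for each $\alpha\in\mathcal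 A$ and $\{f(\alpha)\}$ has the finite intersection property, then $\bigcap_\alpha f(\alpha)\neq\emptyset$. Construction: $\Lambda$ is the set of finite subsets of $\mathcal A$ directed by inclusion. For $\lambda\in\Lambda$, $N^{(0)}_\lambda$ is the set of functions $v$ on $\lambda$ with $v(\alpha)\in\alpha$ for all $\alpha\in\lambda$ and $\wedge v:=\bigcap_{\alpha\in\lambda}v(\alpha)\neq\emptyset$ (empty intersection meaning $X$); $\mathrm{cov}_\lambda=\{\wedge v: v\in N^{(0)}_\lambda\}$. $F_\lambda$ is the simplicial complex (weak topology) with vertex set $N^{(0)}_\lambda$ in which a finite set $\{v_1,\dots,v_k\}$ spans a simplex iff $\wedge v_i\cap\wedge v_j\neq\emptyset$ for all $i,j$. For $\lambda\subset\mu$, $\pi^\mu_\lambda:F_\mu\to F_\lambda$ is the simplicial map sending each vertex $v$ to its restriction $v|_\lambda$. $F_\infty=\varprojlim(F_\lambda,\pi^\mu_\lambda;\Lambda)$ with projections $\pi_\lambda$, and $z(\lambda)=\pi_\lambda(z)$. For $a\in F_\lambda$, $\sigma_\lambda(a)$ denotes the unique simplex of $F_\lambda$ containing $a$ in its interior (all barycentric coordinates positive), and $\wedge a=\bigcap\{\wedge v: v\text{ a vertex of }\sigma_\lambda(a)\}$ (possibly empty). *)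

From mathcomp Require Import all_boot all_order all_algebra.
From mathcomp Require Import all_classical all_reals all_analysis.
From mathcomp Require Import Rstruct Rstruct_topology.
Set Implicit Arguments. Unset Strict Implicit. Unset Printing Implicit Defensive.
Import Order.TTheory GRing.Theory Num.Theory.
Local Open Scope classical_set_scope.
Local Open Scope ring_scope.

Definition Rr : realType := Rdefinitions.R.

Section Defs.
Variable X : topologicalType.

Definition tychonoff : Prop :=
  (forall x y : X, x <> y -> exists U : set X, open U /\ U x /\ ~ U y) /\
  (forall (B : set X) (x : X), closed B -> ~ B x ->
     exists f : X -> Rr, continuous f /\ (forall y, 0 <= f y <= 1) /\
       f x = 0 /\ (forall y, B y -> f y = 1)).

(** Continuous pseudometrics; they generate the finest (universal) uniformity. *)
Definition cont_pseudometric (d : X -> X -> Rr) : Prop :=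
  (forall x y, 0 <= d x y) /\ (forall x, d x x = 0) /\
  (forall x y, d x y = d y x) /\ (forall x y z, d x z <= d x y + d y z) /\
  continuous (fun p : (X * X)%type => d p.1 p.2).

Definition fine_cauchy (F : set_system X) : Prop :=
  forall d, cont_pseudometric d -> forall e : Rr, 0 < e ->
    exists B, F B /\ (forall x y, B x -> B y -> d x y < e).

Definition topologically_complete : Prop :=
  tychonoff /\
  forall F : set_system X, ProperFilter F -> fine_cauchy F ->
    exists x : X, nbhs x `<=` F.

Definition locally_finite (al : set (set X)) : Prop :=
  forall x : X, exists U : set X, open U /\ U x /\
    finite_set [set V | al V /\ (V `&` U) !=set0].

Definition closed_lf_normal_cover (al : set (set X)) : Prop :=
  (forall x : X, exists V, al V /\ V x) /\
  (forall V, al V -> closed V) /\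
  locally_finite al /\
  exists phi : set X -> X -> Rr,
    (forall V, al V -> continuous (phi V)) /\
    (forall V x, al V -> 0 <= phi V x) /\
    (forall V, al V -> closure [set x | 0 < phi V x <= 1] `<=` interior V) /\
    (forall x, \sum_(V \in al) phi V x = 1).

(** star_al(S) and iterated stars; starn al 0 S = [set S], so starn al 1 = star. *)
Definition star (al : set (set X)) (S : set X) : set (set X) :=
  [set V | al V /\ (V `&` S) !=set0].

Fixpoint starn (al : set (set X)) (n : nat) (S : set X) : set (set X) :=
  match n with
  | 0%N => [set S]
  | n'.+1 => [set V | al V /\ exists W, starn al n' S W /\ (V `&` W) !=set0]
  end.

Definition condI (A : set (set (set X))) : Prop :=
  forall (U : set X) (x : X), open U -> U x ->
    exists al, A al /\ \bigcup_(V in star al [set x]) V `<=` U.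

Definition in_Lambda (A : set (set (set X))) (l : set (set (set X))) : Prop :=
  finite_set l /\ l `<=` A.

Definition condII (A : set (set (set X))) : Prop :=
  forall f : set (set X) -> set X,
    (forall al, A al -> al (f al)) ->
    (forall l, in_Lambda A l -> (\bigcap_(al in l) f al) !=set0) ->
    (\bigcap_(al in A) f al) !=set0.

(** Vertices of F_l: functions on l (normalised to setT outside l). *)
Definition wedge (l : set (set (set X))) (v : set (set X) -> set X) : set X :=
  \bigcap_(al in l) v al.

Definition vertex (l : set (set (set X))) (v : set (set X) -> set X) : Prop :=
  (forall al, l al -> al (v al)) /\ (forall al, ~ l al -> v al = setT) /\
  wedge l v !=set0.

Definition cov (l : set (set (set X))) : set (set X) :=
  [set wedge l v | v in vertex l].

Definition restr (l : set (set (set X))) (v : set (set X) -> set X) : set (set X) -> set X :=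
  fun al => if `[< l al >] then v al else setT.

(** Points of F_l, given by barycentric coordinates. *)
Definition supp (a : (set (set X) -> set X) -> Rr) : set (set (set X) -> set X) :=
  [set v | a v != 0].

Definition point (l : set (set (set X))) (a : (set (set X) -> set X) -> Rr) : Prop :=
  (forall v, 0 <= a v) /\ finite_set (supp a) /\ supp a `<=` vertex l /\
  (forall v w, supp a v -> supp a w -> (wedge l v `&` wedge l w) !=set0) /\
  \sum_(v \in [set: set (set X) -> set X]) a v = 1.

(** Linear extension of the vertex map v |-> v|_l. *)
Definition proj (l : set (set (set X))) (a : (set (set X) -> set X) -> Rr) :
    (set (set X) -> set X) -> Rr :=
  fun w => \sum_(v \in [set v | restr l v = w]) a v.

Definition Finf (A : set (set (set X)))
    (z : set (set (set X)) -> (set (set X) -> set X) -> Rr) : Prop :=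
  (forall l, in_Lambda A l -> point l (z l)) /\
  (forall l m, in_Lambda A l -> in_Lambda A m -> l `<=` m -> z l = proj l (z m)).

Definition wedgept (l : set (set (set X))) (a : (set (set X) -> set X) -> Rr) : set X :=
  \bigcap_(v in supp a) wedge l v.

End Defs.

From Pilot Require Import Defs.
From mathcomp Require Import all_boot all_order all_algebra.
From mathcomp Require Import all_classical all_reals all_analysis.
From mathcomp Require Import Rstruct Rstruct_topology.
Local Open Scope classical_set_scope.
Local Open Scope ring_scope.

Import GRing.Theory.
Set Implicit Arguments. Unset Strict Implicit.

(* Condition (I) gives a cover al whose star at x lies in U;
   since al is locally finite and closed, some neighbourhood N of x meets only members
   of al that contain x.  If the n-th star of cov l0 at x lies in N, then a member of
   cov (l0 + {al}) meeting the n-th star of cov (l0 + {al}) at x lies in a member of al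
   meeting N, hence in the star of al at x, hence in U.

   (2) Pick a vertex of the carrier of z(l) for each l in Lambda and an ultrafilter
   finer than the tail filter of the directed set Lambda.  The restrictions to {al} of
   these vertices range over the finite carrier of z({al}), so the ultrafilter fixes
   their value g(al) at al.  The choice g has the finite intersection property, and (II)
   gives a point x in all g(al).  Two vertices of one carrier have meeting wedges, so by
   (I) and the closedness of the covers x lies in every wedge of z(l); (I) and the T1
   axiom make such a point unique. *)

Lemma filter_bigcap_finite (T : Type) (I : choiceType) (D : set I) (f : I -> set T)
    (F : set_system T) :
  Filter F -> finite_set D -> (forall i, D i -> F (f i)) -> F (\bigcap_(i in D) f i).
Proof.
move=> FF /finite_fsetP[E ->] FfD; apply: filter_bigI => i iE; exact: FfD.
Qed.

Lemma ultra_finite_image (T : Type) (U : choiceType) (G : set_system T)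
    (B : set T) (f : T -> U) (Q : set U) :
  UltraFilter G -> G B -> finite_set Q -> f @` B `<=` Q ->
  exists u, G (B `&` f @^-1` [set u]).
Proof.
move=> UG GB finQ fBQ; apply: contrapT => nofiber.
have PG : ProperFilter G := @ultra_proper _ _ UG.
have Gnot u : G (~` (B `&` f @^-1` [set u])).
  by case: (in_ultra_setVsetC (B `&` f @^-1` [set u]) UG) => // Gu; case: nofiber; exists u.
have GBC : G (B `&` \bigcap_(u in Q) ~` (B `&` f @^-1` [set u])).
  by apply: filterI => //; apply: filter_bigcap_finite => // u _; exact: Gnot.
have [t [Bt notfiber]] := filter_ex GBC.
by apply: (notfiber (f t)); [apply: fBQ; exists t|].
Qed.

Section Complexes.
Variable X : topologicalType.
Implicit Types (l m : set (set (set X))) (al : set (set X))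
  (v w : set (set X) -> set X) (a b : (set (set X) -> set X) -> Rr).

Lemma restr_in l v al : l al -> restr l v al = v al.
Proof. by move=> lal; rewrite /restr asboolT. Qed.

Lemma wedge_restr l m v : l `<=` m -> wedge m v `<=` wedge l (restr l v).
Proof. by move=> lm y wy al lal; rewrite restr_in //; exact: wy al (lm _ lal). Qed.

Lemma vertex_restr l m v : l `<=` m -> vertex m v -> vertex l (restr l v).
Proof.
move=> lm [v_in [_ [p vp]]]; split; [|split].
- by move=> al lal; rewrite restr_in //; exact: v_in al (lm _ lal).
- by move=> al nlal; rewrite /restr asboolF.
- by exists p; exact: wedge_restr vp.
Qed.

Lemma cov_refine l m V : l `<=` m -> cov m V -> exists2 V0, cov l V0 & V `<=` V0.
Proof.
move=> lm [v vv <-]; exists (wedge l (restr l v)); last exact: wedge_restr.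
by exists (restr l v) => //; exact: vertex_restr vv.
Qed.

Lemma cov_sub_member l al V : l al -> cov l V -> exists2 W, al W & V `<=` W.
Proof. by move=> lal [v [v_in _] <-]; exists (v al); [exact: v_in | move=> y; apply]. Qed.

Lemma starn_cov_refine l m n S W : l `<=` m -> starn (cov m) n S W ->
  exists2 W0, starn (cov l) n S W0 & W `<=` W0.
Proof.
move=> lm; elim: n W => [|n IH] W /=; first by move=> ->; exists S.
move=> [covW [W' [W'n [p [Wp W'p]]]]].
have [W0 W0n W'W0] := IH _ W'n.
have [V0 covV0 WV0] := cov_refine lm covW.
exists V0 => //; split => //; exists W0; split => //.
by exists p; split; [exact: WV0 | exact: W'W0].
Qed.

Lemma closed_locally_finite_nbhs al x :
  (forall V, al V -> closed V) -> locally_finite al ->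
  exists O, [/\ open O, O x & forall V, al V -> (V `&` O) !=set0 -> V x].
Proof.
move=> al_closed al_lf; have [U1 [oU1 [U1x finU1]]] := al_lf x.
pose B := \bigcup_(V in [set V | (al V /\ (V `&` U1) !=set0) /\ ~ V x]) V.
have cB : closed B.
  apply: closed_bigcup; first by apply: sub_finite_set finU1 => V [].
  by move=> V [[alV _] _]; exact: al_closed.
exists (U1 `&` ~` B); split.
- by apply: openI => //; rewrite openC.
- by split => // -[V [_ nVx] Vx].
- move=> V alV [p [Vp [U1p nBp]]]; apply: contrapT => nVx.
  by apply: nBp; exists V => //; split => //; split => //; exists p.
Qed.

Lemma starnS_cov_sub_star l0 l al n x O :
  l0 `<=` l -> l al -> (forall V, al V -> (V `&` O) !=set0 -> V x) ->
  \bigcup_(V in starn (cov l0) n [set x]) V `<=` O ->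
  \bigcup_(V in starn (cov l) n.+1 [set x]) V `<=` \bigcup_(V in star al [set x]) V.
Proof.
move=> l0l lal O_star starnO y [V [covV [W [Wn [p [Vp Wp]]]]] Vy].
have [W0 W0n WW0] := starn_cov_refine l0l Wn.
have Op : O p by apply: starnO; exists W0 => //; exact: WW0.
have [V1 alV1 VV1] := cov_sub_member lal covV.
have V1x : V1 x by apply: O_star => //; exists p; split => //; exact: VV1.
by exists V1; [split => //; exists x | exact: VV1].
Qed.

Lemma point_supp_nonempty l a : Defs.point l a -> exists v, supp a v.
Proof.
move=> [_ [_ [_ [_ sum1]]]]; apply: contrapT => nosupp.
suff : \sum_(v \in [set: set (set X) -> set X]) a v = 0.
  by rewrite sum1 => /eqP; rewrite oner_eq0.
by apply: fsbig1 => v _; apply: contrapT => av; apply: nosupp; exists v; exact/eqP.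
Qed.

Lemma proj_supp_lift l b w :
  supp (Defs.proj l b) w -> exists2 v, supp b v & restr l v = w.
Proof.
rewrite /supp /=; apply: contraNP => nolift; rewrite /Defs.proj fsbig1 //.
by move=> v /= lv; apply: contrapT => bv; apply: nolift; exists v => //; exact/eqP.
Qed.

Lemma proj_supp_restr l m b v :
  Defs.point m b -> supp b v -> supp (Defs.proj l b) (restr l v).
Proof.
move=> [b_ge0 [finb _]] bv; rewrite /supp /Defs.proj /= fsbig_supp; apply/eqP => sum0.
have fin : finite_set ([set u | restr l u = restr l v] `&` b @^-1` [set~ 0]).
  by apply: sub_finite_set finb => u [_ bu]; exact/eqP.
have bv_neq0 : b v <> 0 by exact/eqP.
exact: bv_neq0 (pfsumr_eq0 fin (fun u _ => b_ge0 u) sum0 (conj erefl bv_neq0)).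
Qed.

Section Family.
Variable A : set (set (set X)).
Hypothesis A_closed : forall al, A al -> forall V, al V -> closed V.
Hypothesis A_lf : forall al, A al -> locally_finite al.
Hypothesis A_condI : condI A.

Lemma in_Lambda0 : in_Lambda A set0.
Proof. by split; [exact: finite_set0 | exact: sub0set]. Qed.

Lemma in_Lambda1 al : A al -> in_Lambda A [set al].
Proof. by move=> Aal; split; [exact: finite_set1 | move=> b ->]. Qed.

Lemma in_LambdaU l m : in_Lambda A l -> in_Lambda A m -> in_Lambda A (l `|` m).
Proof. by move=> [fl sl] [fm sm]; split; [rewrite finite_setU | move=> b [/sl|/sm]]. Qed.

Lemma starn_cov_sub n (U : set X) x : open U -> U x ->
  exists l, in_Lambda A l /\ \bigcup_(V in starn (cov l) n [set x]) V `<=` U.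
Proof.
elim: n U => [|n IH] U oU Ux.
  by exists set0; split; [exact: in_Lambda0 | move=> y [V /= -> ->]].
have [al [Aal starU]] := A_condI oU Ux.
have [N [oN Nx N_star]] := closed_locally_finite_nbhs x (A_closed Aal) (A_lf Aal).
have [l0 [l0L starnN]] := IH N oN Nx.
exists (l0 `|` [set al]); split; first exact/in_LambdaU/in_Lambda1.
apply: subset_trans starU.
by apply: (starnS_cov_sub_star _ _ N_star starnN); [move=> b; left | right].
Qed.

Definition Lambda_above l := [set m | in_Lambda A m /\ l `<=` m].

Definition Lambda_filter := filter_from (in_Lambda A) Lambda_above.

Lemma Lambda_filter_proper : ProperFilter Lambda_filter.
Proof.
apply: filter_from_proper; last by move=> l Ll; exists l; split.
apply: filter_from_filter; first by exists set0; exact: in_Lambda0.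
move=> l1 l2 L1 L2; exists (l1 `|` l2); first exact: in_LambdaU.
by move=> m [Lm l12m]; split; split => // b lb; apply: l12m; [left | right].
Qed.

Section FinfPoint.
Variable z : set (set (set X)) -> (set (set X) -> set X) -> Rr.
Hypothesis zA : Finf A z.

Lemma Finf_supp_vertex m v : in_Lambda A m -> supp (z m) v -> vertex m v.
Proof. by move=> Lm; exact: (zA.1 _ Lm).2.2.1. Qed.

Lemma Finf_supp_restr l m v : in_Lambda A l -> in_Lambda A m -> l `<=` m ->
  supp (z m) v -> supp (z l) (restr l v).
Proof.
by move=> Ll Lm lm mv; rewrite (zA.2 _ _ Ll Lm lm); exact: proj_supp_restr (zA.1 _ Lm) mv.
Qed.

Lemma Finf_supp_lift l m w : in_Lambda A l -> in_Lambda A m -> l `<=` m ->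
  supp (z l) w -> exists2 v, supp (z m) v & restr l v = w.
Proof. by move=> Ll Lm lm; rewrite (zA.2 _ _ Ll Lm lm); exact: proj_supp_lift. Qed.

Definition carrier_cluster (g : set (set X) -> set X) :=
  forall l, in_Lambda A l -> exists m v,
    [/\ in_Lambda A m, l `<=` m, supp (z m) v & forall al, l al -> v al = g al].

Lemma Finf_carrier_cluster : exists g, carrier_cluster g.
Proof.
have [vm vm_supp] : exists vm, forall m, in_Lambda A m -> supp (z m) (vm m).
  suff /choice[vm vmP] : forall m, exists v, in_Lambda A m -> supp (z m) v by exists vm.
  move=> m; have [Lm|nLm] := pselect (in_Lambda A m); last by exists (fun=> setT) => /nLm.
  by have [v mv] := point_supp_nonempty (zA.1 _ Lm); exists v.
have [G [UG LG]] := ultraFilterLemma Lambda_filter_proper.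
have PG : ProperFilter G := @ultra_proper _ _ UG.
have G_above l : in_Lambda A l -> G (Lambda_above l).
  by move=> Ll; apply: LG; exists l.
pose fiber al V := Lambda_above [set al] `&` (vm ^~ al) @^-1` [set V].
have [g Gfiber] : exists g, forall al, A al -> G (fiber al (g al)).
  suff /choice[g gP] : forall al, exists V, A al -> G (fiber al V) by exists g.
  move=> al; have [Aal|nAal] := pselect (A al); last by exists setT => /nAal.
  have Lal := in_Lambda1 Aal.
  have fiberQ :
      (vm ^~ al) @` Lambda_above [set al] `<=` (fun w => w al) @` supp (z [set al]).
    move=> _ [m [Lm alm] <-]; exists (restr [set al] (vm m)); last by rewrite restr_in.
    exact: Finf_supp_restr Lal Lm alm (vm_supp m Lm).
  have finQ := finite_image (fun w => w al) (zA.1 _ Lal).2.1.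
  by have [V GV] := ultra_finite_image UG (G_above _ Lal) finQ fiberQ; exists V.
exists g => l Ll.
have Gl : G (Lambda_above l `&` \bigcap_(al in l) fiber al (g al)).
  apply: filterI; first exact: G_above.
  by apply: filter_bigcap_finite Ll.1 _ => al lal; exact: Gfiber (Ll.2 _ lal).
have [m [[Lm lm] mfiber]] := filter_ex Gl.
exists m, (vm m); split => // [|al lal]; first exact: vm_supp.
by have [_ ->] := mfiber al lal.
Qed.

Lemma carrier_cluster_mem g al : carrier_cluster g -> A al -> al (g al).
Proof.
move=> gc Aal; have [m [v [Lm alm mv vg]]] := gc _ (in_Lambda1 Aal).
by rewrite -vg //; exact: (Finf_supp_vertex Lm mv).1 al (alm _ erefl).
Qed.

Lemma carrier_cluster_fip g : carrier_cluster g ->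
  forall l, in_Lambda A l -> (\bigcap_(al in l) g al) !=set0.
Proof.
move=> gc l Ll; have [m [v [Lm lm mv vg]]] := gc l Ll.
have [_ [_ [p vp]]] := Finf_supp_vertex Lm mv.
by exists p => al lal; rewrite -vg //; exact: vp al (lm _ lal).
Qed.

Lemma wedgept_carrier_cluster g x :
  carrier_cluster g -> (forall al, A al -> g al x) ->
  forall l, in_Lambda A l -> wedgept l (z l) x.
Proof.
move=> gc gx l Ll w lw al lal; apply: contrapT => nwx.
have wal : al (w al) := (Finf_supp_vertex Ll lw).1 _ lal.
have oU : open (~` w al) by rewrite openC; exact: A_closed (Ll.2 _ lal) _ wal.
have [be [Abe star_be]] := A_condI oU nwx.
have [m [v [Lm lbem mv vg]]] := gc _ (in_LambdaU Ll (in_Lambda1 Abe)).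
have lm : l `<=` m by move=> b lb; apply: lbem; left.
have mbe : m be by apply: lbem; right.
have [w' mw' w'w] := Finf_supp_lift Ll Lm lm lw.
have [y [w'y vy]] := (zA.1 _ Lm).2.2.2.1 _ _ mw' mv.
have ywal : w al y by rewrite -w'w restr_in //; exact: w'y al (lm _ lal).
apply: (star_be y) ywal; exists (g be).
  by split; [exact: carrier_cluster_mem gc Abe | exists x; split => //; exact: gx].
by rewrite -vg; [exact: vy be mbe | right].
Qed.

Lemma wedgept_unique x y :
  (forall p q : X, p <> q -> exists U, open U /\ U p /\ ~ U q) ->
  (forall l, in_Lambda A l -> wedgept l (z l) x) ->
  (forall l, in_Lambda A l -> wedgept l (z l) y) -> x = y.
Proof.
move=> T1 wx wy; apply: contrapT => /T1[U [oU [Ux nUy]]].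
have [be [Abe star_be]] := A_condI oU Ux.
have Lbe := in_Lambda1 Abe.
have [w bew] := point_supp_nonempty (zA.1 _ Lbe).
apply/nUy/star_be; exists (w be); last exact: wy _ Lbe w bew be erefl.
split; first exact: (Finf_supp_vertex Lbe bew).1 be erefl.
by exists x; split => //; exact: wx _ Lbe w bew be erefl.
Qed.

End FinfPoint.
End Family.
End Complexes.

Theorem lemma2p2 (X : topologicalType) (A : set (set (set X))) :
  topologically_complete X ->
  (forall al, A al -> closed_lf_normal_cover al) ->
  condI A -> condII A ->
  (forall (U : set X) (x : X) (n : nat), open U -> U x -> (0 < n)%N ->
     exists l, in_Lambda A l /\ \bigcup_(V in starn (cov l) n [set x]) V `<=` U) /\
  (forall z, Finf A z ->
     exists x : X, [set y | forall l, in_Lambda A l -> wedgept l (z l) y] = [set x]).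
Proof.
move=> [[T1 _] _] A_cover A_condI A_condII.
have A_closed al : A al -> forall V, al V -> closed V by move=> /A_cover[_ []].
have A_lf al : A al -> locally_finite al by move=> /A_cover[_ [_ []]].
split=> [U x n oU Ux _|z zA]; first exact: starn_cov_sub.
have [g gc] := Finf_carrier_cluster zA.
have [x gx] := A_condII g (fun al => carrier_cluster_mem zA gc) (carrier_cluster_fip zA gc).
have wx := wedgept_carrier_cluster A_closed A_condI zA gc gx.
exists x; apply/seteqP; split=> [y wy|_ ->] /=; last exact: wx.
exact/esym/(wedgept_unique A_condI zA T1 wx).
Qed.
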